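(* Let $x,y$ be non-commuting indeterminates and $C=xyx^{-1}y^{-1}$. Let $(R_n)_{n\in\mathbb Z}$ satisfy $$R_{2n}CR_{2n-2}=1+R_{2n-1},\qquad R_{2n+1}CR_{2n-1}=1+R_{2n}^4\qquad(n\in\mathbb Z),$$ with $R_0=yxy^{-1}$ and $R_1=y$. Set $u_n=R_{2n}$. Then $$K_n:=\big((Cu_n)^2+u_{n+1}^2\big)\big(u_{n+1}Cu_n-1\big)^{-1}$$ is independent of $n$.
   Context: Work in the free skew field (non-commutative rational functions) over $\mathbb C$ generated by $x,y$. The two displayed relations are the $(1,4)$-system. They determine $R_n$ for all $n\in\mathbb Z$ from $R_0,R_1$. Note that $u_{n+1}Cu_n-1=R_{2n+1}$. *)

From HB Require Import structures.
From mathcomp Require Import all_boot all_order all_algebra.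
Set Implicit Arguments. Unset Strict Implicit. Unset Printing Implicit Defensive.
Import Order.TTheory GRing.Theory Num.Theory.
Local Open Scope ring_scope.

Definition division_ring (D : unitRingType) : Prop :=
  forall a : D, a != 0 -> a \is a GRing.unit.

Definition commC (D : unitRingType) (x y : D) : D := x * y * x^-1 * y^-1.

Definition sys14 (D : unitRingType) (x y : D) (R : int -> D) : Prop :=
  forall n : int,
    R (2 * n) * commC x y * R (2 * n - 2) = 1 + R (2 * n - 1) /\
    R (2 * n + 1) * commC x y * R (2 * n - 1) = 1 + R (2 * n) ^+ 4.

Definition useq (D : unitRingType) (R : int -> D) (n : int) : D := R (2 * n).

Definition Kseq (D : unitRingType) (x y : D) (R : int -> D) (n : int) : D :=
  ((commC x y * useq R n) ^+ 2 + useq R (n + 1) ^+ 2)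
  * (useq R (n + 1) * commC x y * useq R n - 1)^-1.

From HB Require Import structures.
From mathcomp Require Import all_boot all_order all_algebra.
From mathcomp Require Import zify.
Import Order.TTheory GRing.Theory Num.Theory.

Set Implicit Arguments.
Unset Strict Implicit.
Unset Printing Implicit Defensive.
Local Open Scope ring_scope.

(* The relation R_{k+1} C R_k = R_k R_{k+1} holds for k = 0 by the initial
   values, and it propagates in both directions along Z because
   S = R_{k+1} C R_{k-1} is 1 + R_k or 1 + R_k^4, hence commutes with R_k.
   With a = u_n and b = R_{2n+1} it writes C a and u_{n+1} as conjugates by b
   of a and (1 + b) a^-1, so K_n = b^-1 (a^2 + ((1 + b) a^-1)^2), while
   C u_{n-1} = a^-1 (1 + R_{2n-1}) gives K_{n-1} in terms of a and R_{2n-1}.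
   Since b a^-1 = (a^-1 + a^3) R_{2n-1}^-1, K_n = K_{n-1} becomes an identity
   in the commuting elements a^-1 and a^3. *)

Lemma int_succ_const (T : Type) (f : int -> T) :
  (forall n, f (n + 1) = f n) -> forall n, f n = f 0.
Proof.
move=> fS; elim/int_rec => // m IHm.
- by rewrite -addn1 PoszD fS.
- by rewrite -[m.+1]addn1 PoszD opprD -IHm -fS subrK.
Qed.

Section UnitRing.
Variable D : unitRingType.
Implicit Types C A B Z a b c d e p q : D.

Lemma twist_shift {C A B Z} :
  A \is a GRing.unit -> C \is a GRing.unit -> Z \is a GRing.unit ->
  GRing.comm B (Z * C * A) ->
  (B * C * A == A * B) = (Z * C * B == B * Z).
Proof.
(* Cancelling the unit S = Z C A, both sides reduce to A^-1 B C = B A^-1. *)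
move=> uA uC uZ; have [S defS] : {S | Z * C * A = S} by exists (Z * C * A).
rewrite defS => commBS; have uS : S \is a GRing.unit by rewrite -defS !unitrMl.
have -> : Z = S / A / C by rewrite -defS !mulrK.
have -> : B * (S / A / C) = S * (B / A / C) by rewrite !mulrA commBS.
rewrite divrK // -[S / A * B]mulrA (inj_eq (mulrI uS)).
rewrite -[RHS](inj_eq (mulIr uC)) divrK // -[RHS](inj_eq (mulIr uA)) divrK //.
by rewrite -[RHS](inj_eq (mulrI uA)) !mulrA mulrV // mul1r.
Qed.

Lemma commr_sqr_identity {p q d t} : d \is a GRing.unit -> GRing.comm p q ->
  t * d = p + q ->
  p * q + (p + t) ^+ 2 = t * ((1 + d) * p * (1 + d) + q) / d.
Proof.
move=> ud cpq td.
have -> : (1 + d) * p * (1 + d) + q = t * d + d * p + p * d + d * p * d.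
  by rewrite td mulrDl !mulrDr !mul1r !mulr1 mulrDl !addrA [LHS](ACl (1*5*2*3*4)).
rewrite !mulrDr !mulrDl !mulrA !mulrK // td.
have pt : p * t = (p + q) * p / d.
  by rewrite mulrDl -cpq -mulrDr -td mulrA mulrK.
rewrite expr2 mulrDl !mulrDr pt !addrA (mulrDl p q p) cpq.
by rewrite [RHS]addrA [LHS](ACl (5*3*4*2*1)).
Qed.

Definition kappa C a c : D := ((C * a) ^+ 2 + c ^+ 2) * (c * C * a - 1)^-1.

Lemma kappa_twistE {C a b c} :
  a \is a GRing.unit -> b \is a GRing.unit -> b * C * a = a * b -> c * C * a = 1 + b ->
  kappa C a c = b^-1 * (a ^+ 2 + ((1 + b) / a) ^+ 2).
Proof.
move=> ua ub bCa cCa.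
have Ca : C * a = b^-1 * a * b by rewrite -mulrA -bCa !mulrA mulVr // mul1r.
have uCa : C * a \is a GRing.unit by rewrite Ca !unitrMl ?unitrV.
have hc : c = b^-1 * ((1 + b) / a) * b.
  apply: (mulIr uCa); rewrite mulrA cCa Ca !mulrA mulrK // divrK //.
  by rewrite mulrDr mulr1 mulVr // mulrDl mulVr // mul1r.
have conj2 x : (b^-1 * x * b) ^+ 2 = b^-1 * x ^+ 2 * b by rewrite !expr2 !mulrA mulrK.
by rewrite /kappa cCa [_ - 1]addrC addKr Ca {1}hc !conj2 -mulrDl -mulrDr mulrK.
Qed.

Lemma kappa_invE {C a d e} :
  a \is a GRing.unit -> a * C * e = 1 + d ->
  kappa C e a = ((a^-1 * (1 + d)) ^+ 2 + a ^+ 2) / d.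
Proof.
move=> ua aCe; rewrite /kappa aCe [_ - 1]addrC addKr.
by have -> : C * e = a^-1 * (1 + d) by rewrite -aCe -!mulrA mulKr.
Qed.

Lemma twist_sqr_step {C a b d} :
  a \is a GRing.unit -> d \is a GRing.unit -> a * C * d = d * a -> b * C * d = 1 + a ^+ 4 ->
  a ^+ 2 + ((1 + b) / a) ^+ 2 = b * (((a^-1 * (1 + d)) ^+ 2 + a ^+ 2) / d).
Proof.
move=> ua ud aCd bCd; set t := (a^-1 + a ^+ 3) / d.
have hb : b = t * a.
  have Cd : C * d = a^-1 * (d * a) by rewrite -aCd -!mulrA mulKr.
  have bE : b * a^-1 * d * a = 1 + a ^+ 4 by rewrite -bCd -[b * C * d]mulrA Cd !mulrA.
  rewrite /t (_ : a^-1 + a ^+ 3 = (1 + a ^+ 4) / a).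
    by rewrite -bE !mulrK // divrK.
  by rewrite mulrDl mul1r (exprSr a 3) mulrK.
have -> : (1 + b) / a = a^-1 + t by rewrite hb mulrDl mul1r mulrK.
rewrite hb -mulrA [a * _]mulrA.
have -> : a * ((a^-1 * (1 + d)) ^+ 2 + a ^+ 2) = (1 + d) * a^-1 * (1 + d) + a ^+ 3.
  by rewrite mulrDr expr2 !mulrA mulrV // mul1r -expr2 -exprSr.
rewrite mulrA -(mulKr ua (a ^+ 2)) -exprS.
apply: commr_sqr_identity => //; last exact: divrK.
by apply/commrX/commr_sym/commrV/commr_refl.
Qed.

Lemma kappa_step {C a b c d e} :
  a \is a GRing.unit -> b \is a GRing.unit -> d \is a GRing.unit ->
  b * C * a = a * b -> c * C * a = 1 + b ->
  a * C * d = d * a -> b * C * d = 1 + a ^+ 4 -> a * C * e = 1 + d ->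
  kappa C a c = kappa C e a.
Proof.
move=> ua ub ud bCa cCa aCd bCd aCe.
rewrite (kappa_twistE ua ub bCa cCa) (twist_sqr_step ua ud aCd bCd) mulKr //.
by rewrite (kappa_invE ua aCe).
Qed.

End UnitRing.

Section Sys14.
Variables (D : unitRingType) (x y : D) (R : int -> D).
Hypothesis hsys : sys14 x y R.
Local Notation C := (commC x y).

Lemma KseqE n : Kseq x y R n = kappa C (R (2 * n)) (R (2 * n + 2)).
Proof. by rewrite /Kseq /useq mulrDr mulr1. Qed.

Lemma sys14_odd n : R (2 * n + 2) * C * R (2 * n) = 1 + R (2 * n + 1).
Proof. by have := (hsys (n + 1)).1; rewrite mulrDr mulr1 addrK -addrA. Qed.

Lemma sys14_comm k : GRing.comm (R k) (R (k + 1) * C * R (k - 1)).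
Proof.
have [n [->|->]] : exists n, k = 2 * n \/ k = 2 * n + 1 by exists (k %/ 2)%Z; lia.
- by rewrite (hsys n).2; apply: commrD (commr1 _) (commrX _ (commr_refl _)).
- by rewrite addrK -addrA sys14_odd; apply: commrD (commr1 _) (commr_refl _).
Qed.

Hypotheses (uC : C \is a GRing.unit) (hRunit : forall n, R n \is a GRing.unit).

Lemma sys14_twist_succ k :
  (R (k + 1) * C * R k == R k * R (k + 1)) =
  (R (k + 1 + 1) * C * R (k + 1) == R (k + 1) * R (k + 1 + 1)).
Proof.
have := sys14_comm (k + 1); rewrite addrK => commS.
exact: twist_shift (hRunit k) uC (hRunit _) commS.
Qed.

Hypothesis twist0 : R 1 * C * R 0 == R 0 * R 1.

Lemma sys14_twist k : R (k + 1) * C * R k == R k * R (k + 1).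
Proof.
have := int_succ_const (fun k => esym (sys14_twist_succ k)) k.
by move=> /= ->; rewrite add0r.
Qed.

Lemma Kseq_pred n : Kseq x y R n = Kseq x y R (n - 1).
Proof.
have twist k := eqP (sys14_twist k).
have aCd := twist (2 * n - 1); rewrite subrK in aCd.
rewrite !KseqE mulrBr mulr1 subrK.
exact: kappa_step (hRunit _) (hRunit (2 * n + 1)) (hRunit (2 * n - 1))
  (twist _) (sys14_odd n) aCd (hsys n).2 (hsys n).1.
Qed.
End Sys14.

Theorem lemma4p1 (D : unitRingType) (hD : division_ring D) (x y : D)
    (hx : x \is a GRing.unit) (hy : y \is a GRing.unit)
    (R : int -> D) (hsys : sys14 x y R)
    (hR0 : R 0 = y * x * y^-1) (hR1 : R 1 = y)
    (hRunit : forall n : int, R n \is a GRing.unit) :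
  forall n : int, Kseq x y R n = Kseq x y R 0.
Proof.
have uC : commC x y \is a GRing.unit by rewrite /commC !unitrMl ?unitrV.
have twist0 : R 1 * commC x y * R 0 == R 0 * R 1.
  by rewrite hR0 hR1 /commC !mulrA !divrK // mulrK.
apply: int_succ_const => n.
by rewrite (Kseq_pred hsys uC hRunit twist0) addrK.
Qed.
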